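(* Let $(\mathfrak g,D)$ be a difference Lie algebra, $\mathfrak h$ a vector space regarded as an abelian Lie algebra, $K:\mathfrak h\to\mathfrak h$ linear, and $(\mathfrak h,\varrho,K)$ a representation of $(\mathfrak g,D)$. Then isomorphism classes of abelian extensions of $(\mathfrak g,D)$ by $(\mathfrak h,K)$ whose induced representation is $\varrho$ are in bijection with $\mathcal H^2(\mathfrak g,D;\mathfrak h,\varrho,K)$, the bijection sending an extension to the class of the 2-cocycle $(\omega,\chi)$ associated with any section.
   Context: A difference Lie algebra $(\mathfrak g,D)$: a Lie algebra with linear $D$ such that $D[x,y]=[x,D(y)]-[y,D(x)]+[D(x),D(y)]$. A representation $(V,\varrho,K)$ of $(\mathfrak g,D)$: a Lie representation $\varrho:\mathfrak g\to\mathfrak{gl}(V)$ and linear $K:V\to V$ with $K(\varrho(x)u)=\varrho(D(x))u+\varrho(x)K(u)+\varrho(D(x))K(u)$. An abelian extension of $(\mathfrak g,D)$ by $(\mathfrak h,K)$ is a short exact sequence of Lie algebras $0\to\mathfrak h\xrightarrow{i}\hat{\mathfrak g}\xrightarrow{p}\mathfrak g\to0$, $\mathfrak h$ abelian, with $(\hat{\mathfrak g},\hat D)$ a difference Lie algebra and $\hat D\circ i=i\circ K$, $p\circ\hat D=D\circ p$. For a section $s$ ($p\circ s=\mathrm{Id}$), identifying $\mathfrak h$ with $i(\mathfrak h)$: the induced representation is $\varrho(x)u=[s(x),u]_{\hat{\mathfrak g}}$ (independent of $s$), and the associated cocycle is $\omega(x,y)=[s(x),s(y)]_{\hat{\mathfrak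 g}}-s([x,y])$, $\chi(x)=\hat D(s(x))-s(D(x))$. Two abelian extensions $(\hat{\mathfrak g},\hat D)$, $(\tilde{\mathfrak g},\tilde D)$ are isomorphic if there is an isomorphism of difference Lie algebras $\kappa:\tilde{\mathfrak g}\to\hat{\mathfrak g}$ (Lie algebra isomorphism with $\hat D\kappa=\kappa\tilde D$) compatible with the inclusions of $\mathfrak h$ and projections to $\mathfrak g$ (identity on $\mathfrak h$ and on $\mathfrak g$). Cohomology with coefficients in $(V,\varrho,K)$: $\mathfrak C^1=\mathrm{Hom}(\mathfrak g,V)$, $\mathfrak C^n=\mathrm{Hom}(\wedge^n\mathfrak g,V)\oplus\mathrm{Hom}(\wedge^{n-1}\mathfrak g,V)$ ($n\ge2$), $\delta_\varrho(f,\theta)=(d^{CE}_\varrho f,\partial\theta+T(f))$ ($\delta_\varrho f=(d^{CE}_\varrho f,T(f))$ for $n=1$), where $d^{CE}_\varrho$ is the Chevalley–Eilenberg differential, $\partial\theta(x_1,\dots,x_n)=\sum_i(-1)^{i+1}\varrho(x_i)\theta(\dots,\hat x_i,\dots)+\sum_i(-1)^{i+1}\varrho(D(x_i))\theta(\dots,\hat x_i,\dots)+\sum_{i<j}(-1)^{i+j}\theta([x_i,x_j],x_1,\dots,\hat x_i,\dots,\hat x_j,\dots,x_n)$, and $T(f)(x_1,\dots,x_n)=(-1)^n\big(\sum_{k=1}^n\sum_{i_1<\cdots<i_k}f(y_1,\dots,y_n)-K(f(x_1,\dots,x_n))\big)$ with $y_j=D(x_j)$ for $j\in\{i_1,\dots,i_k\}$,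 $y_j=x_j$ otherwise; $\mathcal H^2(\mathfrak g,D;V,\varrho,K)$ is the second cohomology group. *)

From HB Require Import structures.
From mathcomp Require Import all_boot all_order all_algebra.
Import GRing.Theory.
Local Open Scope ring_scope.

Definition lin {F : fieldType} {U V : lmodType F} (f : U -> V) : Prop :=
  forall (a : F) (x y : U), f (a *: x + y) = a *: f x + f y.

Section Defs.
Variable F : fieldType.

Definition is_lie {L : lmodType F} (br : L -> L -> L) : Prop :=
  (forall x, lin (br x)) /\ (forall y, lin (fun x => br x y)) /\
  (forall x, br x x = 0) /\
  (forall x y z, br x (br y z) + br y (br z x) + br z (br x y) = 0).

Definition diff_lie {L : lmodType F} (br : L -> L -> L) (D : L -> L) : Prop :=
  is_lie br /\ lin D /\
  forall x y, D (br x y) = br x (D y) - br y (D x) + br (D x) (D y).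

Variables (g : lmodType F) (brg : g -> g -> g) (D : g -> g).
Variables (h : lmodType F) (rho : g -> h -> h) (K : h -> h).

Definition is_rep : Prop :=
  (forall x, lin (rho x)) /\
  (forall (a : F) x y u, rho (a *: x + y) u = a *: rho x u + rho y u) /\
  (forall x y u, rho (brg x y) u = rho x (rho y u) - rho y (rho x u)) /\
  lin K /\
  (forall x u, K (rho x u) = rho (D x) u + rho x (K u) + rho (D x) (K u)).

Definition dCE1 (f : g -> h) (x y : g) : h :=
  rho x (f y) - rho y (f x) - f (brg x y).
(* T on 1-cochains: T(f)(x) = (-1)^1 (f(Dx) - K(f x)) *)
Definition T1 (f : g -> h) (x : g) : h := K (f x) - f (D x).
Definition dCE2 (w : g -> g -> h) (x y z : g) : h :=
  rho x (w y z) - rho y (w x z) + rho z (w x y)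
  - w (brg x y) z + w (brg x z) y - w (brg y z) x.
Definition del1 (c : g -> h) (x y : g) : h :=
  rho x (c y) - rho y (c x) + rho (D x) (c y) - rho (D y) (c x) - c (brg x y).
(* T on 2-cochains: T(w)(x,y) = (-1)^2 (w(Dx,y)+w(x,Dy)+w(Dx,Dy) - K(w(x,y))) *)
Definition T2 (w : g -> g -> h) (x y : g) : h :=
  w (D x) y + w x (D y) + w (D x) (D y) - K (w x y).

(* 2-cochains: Hom(wedge^2 g, h) (+) Hom(g, h) *)
Definition cochain2 (w : g -> g -> h) (c : g -> h) : Prop :=
  (forall x, lin (w x)) /\ (forall y, lin (fun x => w x y)) /\
  (forall x, w x x = 0) /\ lin c.

(* 2-cocycles: delta(w, c) = (d^CE w, partial c + T w) = 0 *)
Definition cocycle2 (w : g -> g -> h) (c : g -> h) : Prop :=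
  cochain2 w c /\
  (forall x y z, dCE2 w x y z = 0) /\
  (forall x y, del1 c x y + T2 w x y = 0).

(* equality in H^2: difference is a coboundary delta f = (d^CE f, T f) *)
Definition cohomologous (w1 : g -> g -> h) (c1 : g -> h)
    (w2 : g -> g -> h) (c2 : g -> h) : Prop :=
  exists f : g -> h, lin f /\
    (forall x y, w1 x y - w2 x y = dCE1 f x y) /\
    (forall x, c1 x - c2 x = T1 f x).

Definition is_abext {G : lmodType F} (br : G -> G -> G) (DG : G -> G)
    (i : h -> G) (p : G -> g) : Prop :=
  diff_lie br DG /\ lin i /\ lin p /\
  (forall u v, i u = i v -> u = v) /\
  (forall x, exists a, p a = x) /\
  (forall a, p a = 0 <-> exists u, a = i u) /\
  (forall u v, br (i u) (i v) = 0) /\               (* i Lie morphism, h abelian *)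
  (forall a b, p (br a b) = brg (p a) (p b)) /\
  (forall u, DG (i u) = i (K u)) /\
  (forall a, p (DG a) = D (p a)).

Record abext := AbExt {
  ecar : lmodType F;
  ebr : ecar -> ecar -> ecar;
  eD : ecar -> ecar;
  ei : h -> ecar;
  ep : ecar -> g;
  eax : is_abext ebr eD ei ep
}.

Definition is_section (E : abext) (s : g -> ecar E) : Prop :=
  lin s /\ forall x, ep E (s x) = x.

(* the induced representation of E is rho: [s x, u] = rho x u (h identified with i h) *)
Definition induces_rep (E : abext) : Prop :=
  forall s, is_section E s -> forall x u, ebr E (s x) (ei E u) = ei E (rho x u).

Definition ext_cocycle (E : abext) (s : g -> ecar E) (w : g -> g -> h) (c : g -> h)
  : Prop :=
  (forall x y, ei E (w x y) = ebr E (s x) (s y) - s (brg x y)) /\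
  (forall x, ei E (c x) = eD E (s x) - s (D x)).

Definition ext_iso (E1 E2 : abext) : Prop :=
  exists kappa : ecar E2 -> ecar E1,
    lin kappa /\ bijective kappa /\
    (forall a b, kappa (ebr E2 a b) = ebr E1 (kappa a) (kappa b)) /\
    (forall a, eD E1 (kappa a) = kappa (eD E2 a)) /\
    (forall u, kappa (ei E2 u) = ei E1 u) /\
    (forall a, ep E1 (kappa a) = ep E2 a).

End Defs.

Arguments is_lie {F L} br.
Arguments diff_lie {F L} br D.
Arguments is_rep {F g} brg D {h} rho K.
Arguments dCE1 {F g} brg {h} rho f x y.
Arguments T1 {F g} D {h} K f x.
Arguments dCE2 {F g} brg {h} rho w x y z.
Arguments del1 {F g} brg D {h} rho c x y.
Arguments T2 {F g} D {h} K w x y.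
Arguments cochain2 {F g h} w c.
Arguments cocycle2 {F g} brg D {h} rho K w c.
Arguments cohomologous {F g} brg D {h} rho K w1 c1 w2 c2.
Arguments is_abext {F g} brg D {h} K {G} br DG i p.
Arguments abext {F g} brg D {h} K.
Arguments is_section {F g brg D h K} E s.
Arguments induces_rep {F g brg D h} rho {K} E.
Arguments ext_cocycle {F g} brg D {h K} E s w c.
Arguments ext_iso {F g brg D h K} E1 E2.

From mathcomp Require Import all_boot all_order all_algebra.
From mathcomp Require Import boolp classical_sets.
Import GRing.Theory.
Local Open Scope ring_scope.

(* A linear section [s] identifies an abelian extension, as a vector space, with
   [g * h] through [(x, u) |-> s x + u].  In these coordinates the bracket of
   [s x + u] and [s y + v] is [s (brg x y) + (w x y + rho x v - rho y u)] and
   [D (s x + u) = s (D x) + (c x + K u)].  Evaluated at [s x, s y, s z], the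
   Jacobi identity of the extension is the equation [d^CE w = 0], and the
   compatibility of [D] with the bracket is [partial c + T w = 0]; conversely,
   for a cocycle [(w, c)] these formulas define a difference Lie algebra on
   [g * h].  An isomorphism of extensions compatible with [i] and [p] is, in
   coordinates, [(x, u) |-> (x, u - f x)] for a linear [f], and it respects
   brackets and difference operators exactly when the cocycles differ by
   [delta f].  Linear sections exist by Zorn's lemma. *)

(** * Identities in abelian groups *)

(* A reflexive decision procedure for identities in a [zmodType]: both sides are
   reified over a list of atoms and compared through their integer coefficient
   vectors. *)
Inductive zexpr := ZAtom of nat | ZZero | ZAdd of zexpr & zexpr | ZOpp of zexpr.

Section ZmodNormalization.
Variable V : zmodType.
Implicit Types (env : seq V) (cs ds : seq int).

Fixpoint zeval env e : V :=
  match e with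
  | ZAtom n => nth 0 env n
  | ZZero => 0
  | ZAdd e1 e2 => zeval env e1 + zeval env e2
  | ZOpp e1 => - zeval env e1
  end.

Fixpoint zcombine env cs : V :=
  if cs is c :: cs' then head 0 env *~ c + zcombine (behead env) cs' else 0.

Fixpoint zadd cs ds : seq int :=
  match cs, ds with
  | [::], _ => ds
  | _, [::] => cs
  | c :: cs', d :: ds' => (c + d) :: zadd cs' ds'
  end.

Fixpoint zcoeffs e : seq int :=
  match e with
  | ZAtom n => rcons (nseq n 0) 1
  | ZZero => [::]
  | ZAdd e1 e2 => zadd (zcoeffs e1) (zcoeffs e2)
  | ZOpp e1 => map -%R (zcoeffs e1)
  end.

Lemma zcombine_add env cs ds :
  zcombine env (zadd cs ds) = zcombine env cs + zcombine env ds.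
Proof.
elim: cs ds env => [|c cs IH] [|d ds] env /=; rewrite ?add0r ?addr0 //.
by rewrite IH mulrzDr addrACA.
Qed.

Lemma zcombine_opp env cs : zcombine env (map -%R cs) = - zcombine env cs.
Proof. by elim: cs env => [|c cs IH] env /=; rewrite ?oppr0 // IH opprD mulrNz. Qed.

Lemma zcombine_atom env n : zcombine env (rcons (nseq n 0) 1) = nth 0 env n.
Proof.
elim: n env => [|n IH] [|v env] /=; rewrite ?addr0 ?mul0rz ?add0r //.
by rewrite IH nth_nil.
Qed.

Lemma zeval_coeffs env e : zeval env e = zcombine env (zcoeffs e).
Proof.
elim: e => [n||e1 IH1 e2 IH2|e1 IH1] //=.
- by rewrite zcombine_atom.
- by rewrite zcombine_add IH1 IH2.
- by rewrite zcombine_opp IH1.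
Qed.

Lemma zcombine_eq0 env cs : all (eq_op^~ 0) cs -> zcombine env cs = 0.
Proof.
by elim: cs env => [|c cs IH] env //= /andP[/eqP-> /IH->]; rewrite mulr0z addr0.
Qed.

Lemma zeval_eq env e1 e2 :
  all (eq_op^~ 0) (zcoeffs (ZAdd e1 (ZOpp e2))) -> zeval env e1 = zeval env e2.
Proof.
move=> coeffs0; apply/eqP; rewrite -subr_eq0; apply/eqP.
by rewrite -[_ - _]/(zeval env (ZAdd e1 (ZOpp e2))) zeval_coeffs zcombine_eq0.
Qed.

Lemma zmod_eq_from (A B L R : V) : A = B -> L - R = A - B -> L = R.
Proof. by move=> -> /eqP; rewrite subrr subr_eq0 => /eqP. Qed.

Lemma zmod_eq_from2 (A1 B1 A2 B2 L R : V) :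
  A1 = B1 -> A2 = B2 -> L - R = (A1 - B1) + (A2 - B2) -> L = R.
Proof. by move=> -> -> /eqP; rewrite !subrr addr0 subr_eq0 => /eqP. Qed.

End ZmodNormalization.

Arguments zeval {V}.
Arguments zmod_eq_from {V A B L R}.
Arguments zmod_eq_from2 {V A1 B1 A2 B2 L R}.

Ltac zatoms t l :=
  lazymatch t with
  | @GRing.add _ ?a ?b => let l := zatoms a l in zatoms b l
  | @GRing.opp _ ?a => zatoms a l
  | @GRing.zero _ => l
  | _ => constr:(t :: l)
  end.

(* Atoms are compared up to conversion; duplicates in the list are harmless since
   the first occurrence is always used. *)
Ltac zindex x l :=
  match l with
  | ?y :: _ => let _ := constr:(erefl x : x = y) in constr:(0%N)
  | _ :: ?l' => let n := zindex x l' in constr:(n.+1)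
  end.

Ltac zreify t env :=
  lazymatch t with
  | @GRing.add _ ?a ?b =>
      let ea := zreify a env in let eb := zreify b env in constr:(ZAdd ea eb)
  | @GRing.opp _ ?a => let ea := zreify a env in constr:(ZOpp ea)
  | @GRing.zero _ => constr:(ZZero)
  | _ => let n := zindex t env in constr:(ZAtom n)
  end.

Ltac zmod_eq :=
  lazymatch goal with |- @eq ?T ?l ?r =>
    let env := zatoms l (@nil T) in
    let env := zatoms r env in
    let el := zreify l env in
    let er := zreify r env in
    change (zeval env el = zeval env er);
    apply: zeval_eq; vm_compute; reflexivity
  end.

(* With [H : A = B], prove [L = R] when [L - R] is formally [A - B] or [B - A]. *)
Ltac zmod_use H :=
  first [ apply: (zmod_eq_from H); zmod_eq
        | apply: (zmod_eq_from (esym H)); zmod_eq ].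

Ltac zmod_use2 H1 H2 :=
  first [ apply: (zmod_eq_from2 H1 H2); zmod_eq
        | apply: (zmod_eq_from2 H1 (esym H2)); zmod_eq
        | apply: (zmod_eq_from2 (esym H1) H2); zmod_eq
        | apply: (zmod_eq_from2 (esym H1) (esym H2)); zmod_eq ].

Section LinearMaps.
Context {F : fieldType} {U V W : lmodType F}.

Lemma lin0 {f : U -> V} : lin f -> f 0 = 0.
Proof.
move=> f_lin; have := f_lin 1 0 0; rewrite !scale1r addr0 => f00.
by apply: (addrI (f 0)); rewrite addr0 -f00.
Qed.

Lemma linD {f : U -> V} : lin f -> forall x y, f (x + y) = f x + f y.
Proof. by move=> f_lin x y; have := f_lin 1 x y; rewrite !scale1r. Qed.

Lemma linZ {f : U -> V} : lin f -> forall a x, f (a *: x) = a *: f x.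
Proof. by move=> f_lin a x; have := f_lin a x 0; rewrite !addr0 lin0 // addr0. Qed.

Lemma linN {f : U -> V} : lin f -> forall x, f (- x) = - f x.
Proof. by move=> f_lin x; rewrite -scaleN1r linZ // scaleN1r. Qed.

Lemma lin_comp {f : V -> W} {g : U -> V} : lin f -> lin g -> lin (f \o g).
Proof. by move=> f_lin g_lin a x y /=; rewrite g_lin f_lin. Qed.

Lemma lin_opp {f : U -> V} : lin f -> lin (fun x => - f x).
Proof. by move=> f_lin a x y; rewrite f_lin opprD scalerN. Qed.

Lemma lin_sub {f g : U -> V} : lin f -> lin g -> lin (fun x => f x - g x).
Proof. by move=> f_lin g_lin a x y; rewrite f_lin g_lin scalerBr; zmod_eq. Qed.

End LinearMaps.

(** * Linear sections *)

Section LinearSection.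
Variables (F : fieldType) (G V : lmodType F) (p : G -> V).
Hypotheses (p_lin : lin p) (p_surj : forall x, exists a, p a = x).
Local Open Scope classical_set_scope.

(* The graph of a partial linear section of [p], as a subset of [V * G]. *)
Definition partial_section (A : set (V * G)) :=
  [/\ forall k z1 z2, A z1 -> A z2 -> A (k *: z1 + z2),
      forall z, A z -> p z.2 = z.1 &
      forall z, A z -> z.1 = 0 -> z.2 = 0].

Lemma partial_section_bigcup (C : set (set (V * G))) :
  C `<=` partial_section -> total_on C subset ->
  partial_section (\bigcup_(A in C) A).
Proof.
move=> C_sec C_tot; split.
- move=> k z1 z2 [A CA Az1] [B CB Bz2].
  have [AB|BA] := C_tot A B CA CB.
  + by exists B => //; case: (C_sec B CB) => + _ _; apply; first exact: AB.
  + by exists A => //; case: (C_sec A CA) => + _ _; apply; last exact: BA.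
- by move=> z [A CA]; case: (C_sec A CA) => _ + _; apply.
- by move=> z [A CA]; case: (C_sec A CA) => _ _; apply.
Qed.

Lemma partial_section0 : partial_section [set 0].
Proof.
split=> [k z1 z2 -> ->|z ->|z ->] //=; first by rewrite scaler0 addr0.
exact: lin0.
Qed.

Lemma partial_section_has0 {A} : partial_section A -> A !=set0 -> A 0.
Proof.
by case=> A_cl _ _ [z Az]; have := A_cl (-1) z z Az Az; rewrite scaleN1r addNr.
Qed.

(* Adjoin the line through [(x0, a0)], where [p a0 = x0]; it meets the domain of
   [A] only in [0]. *)
Lemma partial_section_extend {A x0} :
  partial_section A -> A 0 -> ~ (exists b, A (x0, b)) ->
  exists2 B, A `<` B & partial_section B.
Proof.
move=> [A_cl A_p A_fun] A0 x0_out; have [a0 pa0] := p_surj x0.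
pose B z := exists t z', A z' /\ z = z' + t *: (x0, a0).
exists B; first split.
- by move=> z Az; exists 0, z; rewrite scale0r addr0.
- move=> /(_ (x0, a0)) BA; apply: x0_out; exists a0; apply: BA.
  by exists 1, 0; rewrite scale1r add0r.
split.
- move=> k _ _ [t1 [z1 [Az1 ->]]] [t2 [z2 [Az2 ->]]].
  exists (k * t1 + t2), (k *: z1 + z2); split; first exact: A_cl.
  by rewrite scalerDr scalerDl scalerA; zmod_eq.
- move=> _ [t [[y b] [Ayb ->]]] /=.
  by rewrite (linD p_lin) (linZ p_lin) pa0 (A_p _ Ayb).
- move=> _ [t [[y b] [Ayb ->]]] /= y0.
  have [t0|tn0] := eqVneq t 0.
    by move: y0; rewrite t0 !scale0r !addr0 => /(A_fun _ Ayb) /= ->.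
  case: x0_out; exists (- t^-1 *: b).
  have -> : x0 = - t^-1 *: y.
    move/eqP: y0; rewrite addr_eq0 => /eqP ->.
    by rewrite scaleNr scalerN opprK scalerA mulVf // scale1r.
  by rewrite -[(_, _)]addr0; apply: (A_cl _ (y, b) 0).
Qed.

Lemma linear_section_exists : exists s : V -> G, lin s /\ forall x, p (s x) = x.
Proof.
have [A [A_sec A_max]] := Zorn_bigcup partial_section_bigcup.
have A0 : A 0.
  apply: partial_section_has0 => //; apply/set0P/eqP => A_eq0.
  apply: (A_max [set 0]) partial_section0; rewrite A_eq0; split=> [z //|].
  by move=> /(_ 0 erefl).
have A_tot x : exists b, A (x, b).
  apply: contrapT => x_out.
  have [B AB B_sec] := partial_section_extend A_sec A0 x_out.
  exact: A_max AB B_sec.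
have [s As] := choice A_tot.
case: A_sec => A_cl A_p A_fun.
exists s; split=> [k x y|x]; last exact: (A_p _ (As x)).
have := A_fun _ (A_cl (-1) _ _ (As (k *: x + y)) (A_cl k _ _ (As x) (As y))).
rewrite /= !scaleN1r addNr => /(_ erefl) /eqP.
by rewrite addrC subr_eq0 => /eqP ->.
Qed.

End LinearSection.

Arguments linear_section_exists {F G V p}.

Lemma alternating_antisym {F : fieldType} {L V : lmodType F} {w : L -> L -> V} :
  (forall x, lin (w x)) -> (forall y, lin (w^~ y)) -> (forall x, w x x = 0) ->
  forall x y, w y x = - w x y.
Proof.
move=> w_linr w_linl w_alt x y.
have := w_alt (x + y); rewrite (linD (w_linl _)) !(linD (w_linr _)) !w_alt.
rewrite add0r addr0.
by move/eqP; rewrite addrC addr_eq0 => /eqP.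
Qed.

Section LieBrackets.
Context {F : fieldType} {L : lmodType F}.
Context {br : L -> L -> L} (br_lie : is_lie br).

Lemma lieDr x y z : br x (y + z) = br x y + br x z.
Proof. exact: linD (br_lie.1 x) y z. Qed.
Lemma lieDl x y z : br (x + y) z = br x z + br y z.
Proof. exact: linD (br_lie.2.1 z) x y. Qed.
Lemma lie0r x : br x 0 = 0.
Proof. exact: lin0 (br_lie.1 x). Qed.
Lemma lie0l y : br 0 y = 0.
Proof. exact: lin0 (br_lie.2.1 y). Qed.
Lemma liexx x : br x x = 0.
Proof. exact: br_lie.2.2.1. Qed.
Lemma lie_antisym x y : br y x = - br x y.
Proof.
by case: br_lie => br_linr [br_linl [br_alt _]]; apply: alternating_antisym.
Qed.
Lemma lieJ x y z : br x (br y z) + br y (br z x) + br z (br x y) = 0.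
Proof. exact: br_lie.2.2.2. Qed.

End LieBrackets.

(** * Abelian extensions and their cocycles *)

Local Arguments ecar {F g brg D h K}.
Local Arguments ebr {F g brg D h K}.
Local Arguments eD {F g brg D h K}.
Local Arguments ei {F g brg D h K}.
Local Arguments ep {F g brg D h K}.
Local Arguments eax {F g brg D h K}.
Local Arguments AbExt {F g brg D h K}.

Section Extensions.
Context {F : fieldType} {g : lmodType F} {brg : g -> g -> g} {D : g -> g}
  {h : lmodType F} {rho : g -> h -> h} {K : h -> h}.
Hypotheses (g_diff : diff_lie brg D) (rho_rep : is_rep brg D rho K).

Let brg_lie : is_lie brg := g_diff.1.
Let D_lin : lin D := g_diff.2.1.
Let D_brg : forall x y, D (brg x y) = brg x (D y) - brg y (D x) + brg (D x) (D y)
  := g_diff.2.2.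
Let rho_linr : forall x, lin (rho x) := rho_rep.1.
Let rho_linl : forall a x y u, rho (a *: x + y) u = a *: rho x u + rho y u
  := rho_rep.2.1.
Let rho_brg : forall x y u, rho (brg x y) u = rho x (rho y u) - rho y (rho x u)
  := rho_rep.2.2.1.
Let K_lin : lin K := rho_rep.2.2.2.1.
Let K_rho : forall x u, K (rho x u) = rho (D x) u + rho x (K u) + rho (D x) (K u)
  := rho_rep.2.2.2.2.

Lemma rhoDr x u v : rho x (u + v) = rho x u + rho x v. Proof. exact: linD. Qed.
Lemma rhoNr x u : rho x (- u) = - rho x u. Proof. exact: linN. Qed.
Lemma rho0r x : rho x 0 = 0. Proof. exact: lin0. Qed.
Lemma rho0l u : rho 0 u = 0.
Proof. exact: (lin0 (fun a x y => rho_linl a x y u)). Qed.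
Lemma KD u v : K (u + v) = K u + K v. Proof. exact: linD. Qed.
Lemma KN u : K (- u) = - K u. Proof. exact: linN. Qed.
Lemma K0 : K 0 = 0. Proof. exact: lin0. Qed.
Lemma D0 : D 0 = 0. Proof. exact: lin0. Qed.

Section FixedExtension.
Context {E : abext brg D K}.
Let E_ax := eax E.

Lemma ebr_lie : is_lie (ebr E). Proof. by have [[]] := E_ax. Qed.
Lemma eD_lin : lin (eD E). Proof. by have [[_ []]] := E_ax. Qed.
Lemma eD_br a b :
  eD E (ebr E a b) = ebr E a (eD E b) - ebr E b (eD E a) + ebr E (eD E a) (eD E b).
Proof. by have [[_ [_ ->]]] := E_ax. Qed.
Lemma ei_lin : lin (ei E). Proof. by have [_ []] := E_ax. Qed.
Lemma ep_lin : lin (ep E). Proof. by have [_ [_ []]] := E_ax. Qed.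
Lemma ei_inj u v : ei E u = ei E v -> u = v.
Proof. by have [_ [_ [_ [inj _]]]] := E_ax; apply: inj. Qed.
Lemma ep_eq0 a : ep E a = 0 <-> exists u, a = ei E u.
Proof. by have [_ [_ [_ [_ [_ [ker _]]]]]] := E_ax; apply: ker. Qed.
Lemma ebr_ei u v : ebr E (ei E u) (ei E v) = 0.
Proof. by have [_ [_ [_ [_ [_ [_ [-> _]]]]]]] := E_ax. Qed.
Lemma ep_br a b : ep E (ebr E a b) = brg (ep E a) (ep E b).
Proof. by have [_ [_ [_ [_ [_ [_ [_ [-> _]]]]]]]] := E_ax. Qed.
Lemma eD_ei u : eD E (ei E u) = ei E (K u).
Proof. by have [_ [_ [_ [_ [_ [_ [_ [_ [-> _]]]]]]]]] := E_ax. Qed.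
Lemma ep_eD a : ep E (eD E a) = D (ep E a).
Proof. by have [_ [_ [_ [_ [_ [_ [_ [_ [_ ->]]]]]]]]] := E_ax. Qed.
Lemma ep_ei u : ep E (ei E u) = 0.
Proof. by apply/ep_eq0; exists u. Qed.

Lemma eiD u v : ei E (u + v) = ei E u + ei E v.
Proof. exact: (linD ei_lin u v). Qed.
Lemma eiN u : ei E (- u) = - ei E u. Proof. exact: (linN ei_lin u). Qed.
Lemma eiZ a u : ei E (a *: u) = a *: ei E u. Proof. exact: (linZ ei_lin a u). Qed.
Lemma ei0 : ei E 0 = 0. Proof. exact: (lin0 ei_lin). Qed.
Lemma epD a b : ep E (a + b) = ep E a + ep E b.
Proof. exact: (linD ep_lin a b). Qed.
Lemma eDD a b : eD E (a + b) = eD E a + eD E b.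
Proof. exact: (linD eD_lin a b). Qed.

Lemma abext_section_exists : exists s, is_section E s.
Proof.
have [_ [_ [p_lin [_ [p_surj _]]]]] := E_ax.
by have [s [s_lin s_p]] := linear_section_exists p_lin p_surj; exists s.
Qed.

Lemma section_decomposition {s} : is_section E s ->
  exists2 pr : ecar E -> h, lin pr & forall a, a = s (ep E a) + ei E (pr a).
Proof.
move=> [s_lin s_p].
have /choice[pr prP] a : exists u, a - s (ep E a) = ei E u.
  by apply/ep_eq0; rewrite epD (linN ep_lin) s_p subrr.
exists pr => [k a b|a]; last by rewrite -prP; zmod_eq.
by apply: ei_inj; rewrite ei_lin -!prP ep_lin s_lin scalerBr; zmod_eq.
Qed.

Section SectionCoordinates.
Context {s : g -> ecar E} {pr : ecar E -> h}.
Hypotheses (s_sec : is_section E s) (s_pr : forall a, a = s (ep E a) + ei E (pr a)).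

Lemma pr_coord x u : pr (s x + ei E u) = u.
Proof.
apply: ei_inj; apply: (addrI (s x)).
by rewrite [in RHS](s_pr (s x + ei E u)) epD s_sec.2 ep_ei addr0.
Qed.

Lemma pr_ei u : pr (ei E u) = u.
Proof. by have := pr_coord 0 u; rewrite (lin0 s_sec.1) add0r. Qed.

End SectionCoordinates.

Lemma ext_cocycle_exists {s} : is_section E s ->
  exists w c, ext_cocycle brg D E s w c.
Proof.
move=> s_sec; have [pr _ s_pr] := section_decomposition s_sec.
exists (fun x y => pr (ebr E (s x) (s y))), (fun x => pr (eD E (s x))).
split=> [x y|x].
  by rewrite [in RHS](s_pr (ebr E _ _)) ep_br !s_sec.2; zmod_eq.
by rewrite [in RHS](s_pr (eD E _)) ep_eD s_sec.2; zmod_eq.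
Qed.

Section CocycleOfSection.
Context {s : g -> ecar E} {w : g -> g -> h} {c : g -> h}.
Hypotheses (s_sec : is_section E s) (E_rho : induces_rep rho E)
  (E_wc : ext_cocycle brg D E s w c).

Lemma ebr_sec_ei x u : ebr E (s x) (ei E u) = ei E (rho x u).
Proof. exact: E_rho. Qed.

Lemma ebr_ei_sec u y : ebr E (ei E u) (s y) = - ei E (rho y u).
Proof. by rewrite (lie_antisym ebr_lie (s y)) ebr_sec_ei. Qed.

Lemma ebr_sec x y : ebr E (s x) (s y) = s (brg x y) + ei E (w x y).
Proof. by rewrite E_wc.1; zmod_eq. Qed.

Lemma eD_sec x : eD E (s x) = s (D x) + ei E (c x).
Proof. by rewrite E_wc.2; zmod_eq. Qed.

Lemma ebr_coord x y u v : ebr E (s x + ei E u) (s y + ei E v) =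
  s (brg x y) + ei E (w x y + rho x v - rho y u).
Proof.
rewrite (lieDl ebr_lie) !(lieDr ebr_lie) ebr_sec ebr_sec_ei ebr_ei_sec ebr_ei.
by rewrite !eiD eiN; zmod_eq.
Qed.

Lemma eD_coord x u : eD E (s x + ei E u) = s (D x) + ei E (c x + K u).
Proof. by rewrite eDD eD_sec eD_ei eiD; zmod_eq. Qed.

Lemma ext_cocycle_cochain : cochain2 w c.
Proof.
have [pr pr_lin s_pr] := section_decomposition s_sec.
have [s_lin _] := s_sec.
have w_pr x y : w x y = pr (ebr E (s x) (s y) - s (brg x y)).
  by rewrite -E_wc.1 (pr_ei s_sec s_pr).
have c_pr x : c x = pr (eD E (s x) - s (D x)).
  by rewrite -E_wc.2 (pr_ei s_sec s_pr).
split; [|split; [|split]].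
- move=> x k y y'; rewrite !w_pr.
  exact: (lin_comp pr_lin (lin_sub (lin_comp (ebr_lie.1 (s x)) s_lin)
                                   (lin_comp s_lin (brg_lie.1 x)))).
- move=> y k x x'; rewrite !w_pr.
  exact: (lin_comp pr_lin (lin_sub (lin_comp (ebr_lie.2.1 (s y)) s_lin)
                                   (lin_comp s_lin (brg_lie.2.1 y)))).
- move=> x; rewrite w_pr (liexx ebr_lie) (liexx brg_lie) (lin0 s_lin).
  by rewrite subrr (lin0 pr_lin).
- move=> k x x'; rewrite !c_pr.
  exact: (lin_comp pr_lin (lin_sub (lin_comp eD_lin s_lin) (lin_comp s_lin D_lin))).
Qed.

Lemma ext_cocycle_dCE2 x y z : dCE2 brg rho w x y z = 0.
Proof.
have [w_linr [w_linl [w_alt _]]] := ext_cocycle_cochain.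
have wC := alternating_antisym w_linr w_linl w_alt.
have jacE := lieJ ebr_lie (s x) (s y) (s z).
rewrite !ebr_sec !(lieDr ebr_lie) !ebr_sec !ebr_sec_ei in jacE.
have jacg : s (brg x (brg y z)) + s (brg y (brg z x)) + s (brg z (brg x y)) = 0.
  by rewrite -!(linD s_sec.1) (lieJ brg_lie) (lin0 s_sec.1).
rewrite (wC (brg y z) x) (wC (brg z x) y) (wC (brg x y) z) (wC x z) in jacE.
rewrite (lie_antisym brg_lie x z) in jacE jacg.
rewrite (linN (w_linl _)) !rhoNr !eiN in jacE.
apply: ei_inj; rewrite ei0 /dCE2 !eiD !eiN.
zmod_use2 jacE jacg.
Qed.

Lemma ext_cocycle_del1_T2 x y : del1 brg D rho c x y + T2 D K w x y = 0.
Proof.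
have [w_linr [w_linl [w_alt _]]] := ext_cocycle_cochain.
have wC := alternating_antisym w_linr w_linl w_alt.
have compat := eD_br (s x) (s y).
rewrite !eD_sec ebr_sec eDD eD_sec eD_ei in compat.
rewrite !(lieDl ebr_lie) !(lieDr ebr_lie) !ebr_sec in compat.
rewrite !ebr_sec_ei !ebr_ei_sec ebr_ei D_brg in compat.
rewrite !(linD s_sec.1) (linN s_sec.1) (wC (D x) y) !eiN in compat.
apply: ei_inj; rewrite ei0 /del1 /T2 !eiD !eiN.
zmod_use compat.
Qed.

Lemma ext_cocycle_cocycle2 : cocycle2 brg D rho K w c.
Proof.
split; first exact: ext_cocycle_cochain.
by split; [exact: ext_cocycle_dCE2 | exact: ext_cocycle_del1_T2].
Qed.

End CocycleOfSection.

End FixedExtension.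

Section Isomorphisms.
Context {E1 E2 : abext brg D K} {s1 : g -> ecar E1} {s2 : g -> ecar E2}
  {w1 w2 : g -> g -> h} {c1 c2 : g -> h}.
Hypotheses (s1_sec : is_section E1 s1) (s2_sec : is_section E2 s2)
  (E1_rho : induces_rep rho E1) (E2_rho : induces_rep rho E2)
  (E1_wc : ext_cocycle brg D E1 s1 w1 c1) (E2_wc : ext_cocycle brg D E2 s2 w2 c2).

(* [kappa (s2 x) = s1 x + f x], and [- f] is the 1-cochain relating the cocycles. *)
Lemma ext_iso_cohomologous : ext_iso E1 E2 -> cohomologous brg D rho K w1 c1 w2 c2.
Proof.
case=> kappa [k_lin [_ [k_br [k_D [k_i k_p]]]]].
have [pr1 pr1_lin s1_pr] := section_decomposition s1_sec.
have pr1_coord := pr_coord s1_sec s1_pr.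
pose f x := pr1 (kappa (s2 x)).
have k_s x : kappa (s2 x) = s1 x + ei E1 (f x).
  by rewrite {1}(s1_pr (kappa (s2 x))) k_p s2_sec.2.
exists (fun x => - f x); split.
  exact: lin_opp (lin_comp pr1_lin (lin_comp k_lin s2_sec.1)).
split=> [x y|x].
- have := k_br (s2 x) (s2 y).
  rewrite (ebr_sec E2_wc) (linD k_lin) k_i !k_s (ebr_coord s1_sec E1_rho E1_wc).
  rewrite -addrA -eiD => /(congr1 pr1); rewrite !pr1_coord => J.
  by rewrite /dCE1 !rhoNr; zmod_use J.
- have := k_D (s2 x).
  rewrite k_s (eD_coord E1_wc) (eD_sec E2_wc) (linD k_lin) k_i k_s.
  rewrite -addrA -eiD => /(congr1 pr1); rewrite !pr1_coord => J.
  by rewrite /T1 KN; zmod_use J.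
Qed.

Lemma cohomologous_ext_iso : cohomologous brg D rho K w1 c1 w2 c2 -> ext_iso E1 E2.
Proof.
case=> f [f_lin [f_w f_c]].
have [pr1 _ s1_pr] := section_decomposition s1_sec.
have [pr2 _ s2_pr] := section_decomposition s2_sec.
pose kappa a := s1 (ep E2 a) + ei E1 (pr2 a - f (ep E2 a)).
pose kappa_inv b := s2 (ep E1 b) + ei E2 (pr1 b + f (ep E1 b)).
have kappa_coord x u : kappa (s2 x + ei E2 u) = s1 x + ei E1 (u - f x).
  by rewrite /kappa epD s2_sec.2 ep_ei addr0 (pr_coord s2_sec s2_pr).
have kappa_inv_coord x u : kappa_inv (s1 x + ei E1 u) = s2 x + ei E2 (u + f x).
  by rewrite /kappa_inv epD s1_sec.2 ep_ei addr0 (pr_coord s1_sec s1_pr).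
have dec1 b : exists x u, b = s1 x + ei E1 u by exists (ep E1 b), (pr1 b).
have dec2 a : exists x u, a = s2 x + ei E2 u by exists (ep E2 a), (pr2 a).
exists kappa; split; [|split; [|split; [|split; [|split]]]].
- move=> k a b; have [x [u ->]] := dec2 a; have [y [v ->]] := dec2 b.
  have -> : k *: (s2 x + ei E2 u) + (s2 y + ei E2 v) =
            s2 (k *: x + y) + ei E2 (k *: u + v).
    by rewrite s2_sec.1 ei_lin scalerDr; zmod_eq.
  rewrite !kappa_coord s1_sec.1 f_lin !scalerDr.
  by rewrite !eiD !eiN !eiD !eiZ !scalerBr; zmod_eq.
- exists kappa_inv => [a|b].
    by have [x [u ->]] := dec2 a; rewrite kappa_coord kappa_inv_coord subrK.
  by have [x [u ->]] := dec1 b; rewrite kappa_inv_coord kappa_coord addrK.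
- move=> a b; have [x [u ->]] := dec2 a; have [y [v ->]] := dec2 b.
  rewrite (ebr_coord s2_sec E2_rho E2_wc) !kappa_coord.
  rewrite (ebr_coord s1_sec E1_rho E1_wc).
  congr (_ + ei E1 _); have := f_w x y; rewrite /dCE1 => J.
  by rewrite !rhoDr !rhoNr; zmod_use J.
- move=> a; have [x [u ->]] := dec2 a.
  rewrite kappa_coord (eD_coord E1_wc) (eD_coord E2_wc) kappa_coord.
  congr (_ + ei E1 _); have := f_c x; rewrite /T1 => J.
  by rewrite KD KN; zmod_use J.
- move=> u; rewrite -[ei E2 u]add0r -(lin0 s2_sec.1) kappa_coord.
  by rewrite (lin0 s1_sec.1) add0r (lin0 f_lin) subr0.
- move=> a; have [x [u ->]] := dec2 a.
  by rewrite kappa_coord !epD s1_sec.2 s2_sec.2 !ep_ei.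
Qed.

End Isomorphisms.

(** * The extension defined by a cocycle *)

Lemma cohomologous_refl w c : cohomologous brg D rho K w c w c.
Proof.
exists (fun=> 0); split=> [k x y|]; first by rewrite scaler0 addr0.
by split=> [x y|x]; rewrite /dCE1 /T1 ?rho0r ?K0 !subrr.
Qed.

Section CocycleExtension.
Variables (w : g -> g -> h) (c : g -> h).
Hypothesis wc_cocycle : cocycle2 brg D rho K w c.

Let w_linr : forall x, lin (w x) := wc_cocycle.1.1.
Let w_linl : forall y, lin (w^~ y) := wc_cocycle.1.2.1.
Let w_alt : forall x, w x x = 0 := wc_cocycle.1.2.2.1.
Let c_lin : lin c := wc_cocycle.1.2.2.2.
Let w_dCE2 : forall x y z, dCE2 brg rho w x y z = 0 := wc_cocycle.2.1.
Let wc_del1_T2 : forall x y, del1 brg D rho c x y + T2 D K w x y = 0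
  := wc_cocycle.2.2.
Let wC := alternating_antisym w_linr w_linl w_alt.

Definition cocycle_br (a b : g * h) : g * h :=
  (brg a.1 b.1, rho a.1 b.2 - rho b.1 a.2 + w a.1 b.1).

Definition cocycle_D (a : g * h) : g * h := (D a.1, c a.1 + K a.2).

Lemma cocycle_br_lie : is_lie cocycle_br.
Proof.
split; [|split; [|split]].
- move=> [x u] k [y v] [y' v']; apply: injective_projections => /=.
    by rewrite brg_lie.1.
  by rewrite rho_linr rho_linl w_linr !scalerDr !scalerN; zmod_eq.
- move=> [y v] k [x u] [x' u']; apply: injective_projections => /=.
    by rewrite brg_lie.2.1.
  by rewrite rho_linr rho_linl w_linl !scalerDr !scalerN; zmod_eq.
- by move=> [x u]; rewrite /cocycle_br /= (liexx brg_lie) subrr w_alt addr0.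
- move=> [x u] [y v] [z t]; apply: injective_projections => /=.
    exact: (lieJ brg_lie).
  have := w_dCE2 x y z; rewrite /dCE2 => J.
  rewrite !rhoDr !rhoNr !rho_brg (wC (brg y z)) (wC (brg z x)) (wC (brg x y)).
  rewrite (wC x z) (lie_antisym brg_lie x z) (linN (w_linl _)) !rhoNr.
  by zmod_use J.
Qed.

Lemma cocycle_diff_lie : diff_lie cocycle_br cocycle_D.
Proof.
split; first exact: cocycle_br_lie.
split=> [k [x u] [y v]|[x u] [y v]]; apply: injective_projections => /=.
- exact: D_lin.
- by rewrite c_lin K_lin !scalerDr; zmod_eq.
- exact: D_brg.
- have := wc_del1_T2 x y; rewrite /del1 /T2 => J.
  rewrite !KD !KN !K_rho !rhoDr (wC (D x) y).
  by zmod_use J.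
Qed.

Lemma cocycle_abext :
  is_abext brg D K cocycle_br cocycle_D (fun u => (0, u)) fst.
Proof.
split; first exact: cocycle_diff_lie.
split.
  by move=> k u v; apply: injective_projections; rewrite /= ?scaler0 ?addr0.
split; first by [].
split; first by move=> u v [].
split; first by move=> x; exists (x, 0).
split; first by move=> [x u] /=; split=> [->|[v [->]]]; first exists u.
split.
  move=> u v; apply: injective_projections => /=; first exact: (lie0l brg_lie).
  by rewrite !rho0l (lin0 (w_linl _)) subrr addr0.
split; first by [].
split=> [u|//]; apply: injective_projections => /=; first exact: D0.
by rewrite (lin0 c_lin) add0r.
Qed.

Definition cocycle_ext : abext brg D K := AbExt _ _ _ _ _ cocycle_abext.

Lemma cocycle_ext_section : is_section cocycle_ext (fun x => (x, 0)).
Proof.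
by split=> // k x y; apply: injective_projections; rewrite /= ?scaler0 ?addr0.
Qed.

Lemma cocycle_ext_rep : induces_rep rho cocycle_ext.
Proof.
move=> s [_ s_p] x u; have /= := s_p x; case: (s x) => y v /= ->.
apply: injective_projections => /=; first exact: (lie0r brg_lie).
by rewrite rho0l subr0 (lin0 (w_linr _)) addr0.
Qed.

Lemma cocycle_ext_cocycle : ext_cocycle brg D cocycle_ext (fun x => (x, 0)) w c.
Proof.
split=> [x y|x]; apply: injective_projections => /=.
- by rewrite subrr.
- by rewrite !rho0r subrr add0r subr0.
- by rewrite subrr.
- by rewrite K0 addr0 subr0.
Qed.

End CocycleExtension.

End Extensions.

Theorem theorem4p17 (F : fieldType) (g : lmodType F) (brg : g -> g -> g)
    (D : g -> g) (h : lmodType F) (rho : g -> h -> h) (K : h -> h)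
    (Hg : diff_lie brg D) (Hrep : is_rep brg D rho K) :
  (* every abelian extension admits a (linear) section *)
  (forall E : abext brg D K, exists s, is_section E s) /\
  (* the data associated with a section is a well-defined 2-cocycle *)
  (forall (E : abext brg D K), induces_rep rho E ->
     forall s, is_section E s ->
     exists w c, ext_cocycle brg D E s w c /\ cocycle2 brg D rho K w c) /\
  (* the map [E] |-> [(w, c)] is well defined on isomorphism classes
     (independent of section and of representative) and injective *)
  (forall (E1 E2 : abext brg D K), induces_rep rho E1 -> induces_rep rho E2 ->
     forall s1 s2 w1 c1 w2 c2,
       is_section E1 s1 -> is_section E2 s2 ->
       ext_cocycle brg D E1 s1 w1 c1 -> ext_cocycle brg D E2 s2 w2 c2 ->
       (ext_iso E1 E2 <-> cohomologous brg D rho K w1 c1 w2 c2)) /\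
  (* and surjective onto H^2 *)
  (forall w c, cocycle2 brg D rho K w c ->
     exists E : abext brg D K, induces_rep rho E /\
       exists s w' c', is_section E s /\ ext_cocycle brg D E s w' c' /\
         cohomologous brg D rho K w c w' c').
Proof.
split; first by move=> E; apply: abext_section_exists.
split.
  move=> E E_rho s s_sec; have [w [c E_wc]] := ext_cocycle_exists s_sec.
  exists w, c; split=> //.
  exact: (ext_cocycle_cocycle2 Hg Hrep s_sec E_rho E_wc).
split.
  move=> E1 E2 E1_rho E2_rho s1 s2 w1 c1 w2 c2 s1_sec s2_sec E1_wc E2_wc; split.
    exact: (ext_iso_cohomologous Hrep s1_sec s2_sec E1_rho E1_wc E2_wc).
  exact: (cohomologous_ext_iso Hrep s1_sec s2_sec E1_rho E2_rho E1_wc E2_wc).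
move=> w c wc_cocycle; exists (cocycle_ext Hg Hrep w c wc_cocycle).
split; first exact: cocycle_ext_rep.
exists (fun x => (x, 0)), w, c; split; first exact: cocycle_ext_section.
by split; [exact: cocycle_ext_cocycle | exact: cohomologous_refl].
Qed.
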